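(* Let $A$ and $B$ be $(0,1)$ matrices with $A\neq B$, and let $k=\mathrm{rank}(A-B)$. Then the following are equivalent: (i) $A,B$ are Gram mates and $(A+B)(A-B)^T=0$. (ii) $A,B$ are Gram mates and $(A-B)^T(A+B)=0$. (iii) $B$ is obtained from $A$ by changing the signs of $k$ positive singular values (these $k$ positive singular values being the same as those of $\frac12(A-B)$). (iv) There exist $k$ right singular vectors $\mathbf v_1,\dots,\mathbf v_k$ of $A$ corresponding to positive singular values which form a basis of $\mathrm{Row}(A-B)$ and satisfy $(A+B)\mathbf v_i=0$ for all $i$ (these can be obtained from right singular vectors corresponding to the positive singular values of $\frac12(A-B)$). (v) There exist $k$ left singular vectors $\mathbf u_1,\dots,\mathbf u_k$ of $A$ corresponding to positive singular values which form a basis of $\mathrm{Col}(A-B)$ and satisfy $(A+B)^T\mathbf u_i=0$ for all $i$ (these can be obtained from left singular vectors corresponding to the positive singular values of $\frac12(A-B)$). (vi) $A,B$ are Gram mates and $A(A-B)^T$ is symmetric. (vii) $A,B$ are Gram mates and $A^T(A-B)$ is symmetric.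
   Context: Two $(0,1)$ matrices $A,B$ are Gram mates if $AA^T=BB^T$, $A^TA=B^TB$ and $A\neq B$. For an $m\times n$ real matrix $A$, ''$B$ is obtained from $A$ by changing the signs of $k$ positive singular values'' means: there are orthogonal $U$, $V$ and a rectangular diagonal $\Sigma$ with nonnegative diagonal entries with $A=U\Sigma V^T$, and a diagonal matrix $S$ with entries $\pm1$, exactly $k$ of them $-1$, each in a position $i$ with $\Sigma_{ii}>0$, such that $B=US\Sigma V^T$. *)

From HB Require Import structures.
From mathcomp Require Import all_boot all_order all_algebra.
From mathcomp Require Import all_classical all_reals.
Set Implicit Arguments. Unset Strict Implicit. Unset Printing Implicit Defensive.
Import Order.TTheory GRing.Theory Num.Theory.
Local Open Scope ring_scope.

Definition zero_one_mx (R : realType) m n (A : 'M[R]_(m, n)) : Prop :=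
  forall i j, A i j = 0 \/ A i j = 1.

Definition gram_mates (R : realType) m n (A B : 'M[R]_(m, n)) : Prop :=
  [/\ A *m A^T = B *m B^T, A^T *m A = B^T *m B & A <> B].

Definition orthogonal_mx (R : realType) n (U : 'M[R]_n) : Prop :=
  U^T *m U = 1%:M.

Definition rect_diag_nonneg (R : realType) m n (S : 'M[R]_(m, n)) : Prop :=
  (forall (i : 'I_m) (j : 'I_n), (i : nat) <> j -> S i j = 0) /\
  (forall (i : 'I_m) (j : 'I_n), (i : nat) = j -> 0 <= S i j).

Definition sign_diag_mx (R : realType) m (S : 'M[R]_m) : Prop :=
  (forall i j : 'I_m, i <> j -> S i j = 0) /\
  (forall i : 'I_m, S i i = 1 \/ S i i = -1).

(* "B is obtained from A by changing the signs of k positive singular values":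
   A = U Sig V^T, B = U S Sig V^T with U, V orthogonal, Sig rectangular
   diagonal nonnegative, S diagonal +-1 with exactly k entries -1, each at a
   position i with Sig_ii > 0. *)
Definition sign_change_sv (R : realType) m n (k : nat) (A B : 'M[R]_(m, n)) : Prop :=
  exists (U : 'M[R]_m) (V : 'M[R]_n) (Sig : 'M[R]_(m, n)) (S : 'M[R]_m),
    [/\ orthogonal_mx U, orthogonal_mx V, rect_diag_nonneg Sig &
        A = U *m Sig *m V^T] /\
    [/\ sign_diag_mx S, #|[set i : 'I_m | S i i == -1]| = k,
        (forall i : 'I_m, S i i = -1 ->
            exists2 j : 'I_n, (j : nat) = i & 0 < Sig i j) &
        B = U *m S *m Sig *m V^T].

Definition right_sing_vec_pos (R : realType) m n (A : 'M[R]_(m, n)) (v : 'cV[R]_n) : Prop :=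
  exists (sigma : R) (u : 'cV[R]_m),
    [/\ 0 < sigma, A *m v = sigma *: u, A^T *m u = sigma *: v,
        v^T *m v = 1%:M & u^T *m u = 1%:M].

Definition left_sing_vec_pos (R : realType) m n (A : 'M[R]_(m, n)) (u : 'cV[R]_m) : Prop :=
  exists (sigma : R) (v : 'cV[R]_n),
    [/\ 0 < sigma, A *m v = sigma *: u, A^T *m u = sigma *: v,
        v^T *m v = 1%:M & u^T *m u = 1%:M].

From HB Require Import structures.
From mathcomp Require Import all_boot all_order all_algebra.
From mathcomp Require Import all_classical all_reals.
From mathcomp Require Import complex ring lra.
Import Order.TTheory GRing.Theory Num.Theory.
Local Open Scope ring_scope.

(* Write S = A + B and D = A - B.  By polarization, the Gram conditions
   AA^T = BB^T and A^TA = B^TB say exactly that S D^T and S^T D are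
   skew-symmetric.  Given them, each of (i), (ii), (vi) and (vii) forces
   S D^T = S^T D = 0, because a skew-symmetric matrix with zero square vanishes;
   conversely S D^T = S^T D = 0 gives back the Gram conditions.  Under these
   two orthogonality relations, compact SVDs of D/2 and S/2 glue into an SVD
   of A = (S + D)/2, and B = (S - D)/2 is obtained by negating the singular
   values coming from D; the right singular vectors of D span Row(A - B) and
   are killed by A + B.  Conversely, a sign change of singular values, or
   singular vectors as in (iv), force S D^T = S^T D = 0 again. *)

Set Implicit Arguments. Unset Strict Implicit. Unset Printing Implicit Defensive.

Lemma trmxZ (R : pzRingType) m n (a : R) (A : 'M[R]_(m, n)) : (a *: A)^T = a *: A^T.
Proof. by apply/matrixP => i j; rewrite !mxE. Qed.

Lemma trmxD (R : pzRingType) m n (A B : 'M[R]_(m, n)) : (A + B)^T = A^T + B^T.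
Proof. by apply/matrixP => i j; rewrite !mxE. Qed.

Lemma trmxB (R : pzRingType) m n (A B : 'M[R]_(m, n)) : (A - B)^T = A^T - B^T.
Proof. by apply/matrixP => i j; rewrite !mxE. Qed.

Lemma trmx_mul_eq0 (R : comPzRingType) m n p (A : 'M[R]_(m, n)) (B : 'M[R]_(n, p)) :
  A *m B = 0 -> B^T *m A^T = 0.
Proof. by move=> AB0; rewrite -trmx_mul AB0 trmx0. Qed.

Lemma mulmx_col (R : pzSemiRingType) m n p (A : 'M[R]_(m, n)) (B : 'M[R]_(n, p)) i :
  A *m col i B = col i (A *m B).
Proof. by rewrite !colE mulmxA. Qed.

Lemma col_mul_diag (R : comPzSemiRingType) m r (U : 'M[R]_(m, r)) d i :
  col i (U *m diag_mx d) = d 0 i *: col i U.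
Proof. by apply/matrixP => a b; rewrite [LHS]mxE mul_mx_diag !mxE mulrC. Qed.

Lemma mulmx_tr_rows_eq0 (R : comPzRingType) p k n (M : 'M[R]_(p, n)) (W : 'M[R]_(k, n)) :
  (forall i, M *m (row i W)^T = 0) -> M *m W^T = 0.
Proof.
move=> MW0; apply: trmx_inj; rewrite trmx_mul trmxK trmx0; apply/row_matrixP => i.
by rewrite row_mul row0 -[row i W]trmxK -trmx_mul MW0 trmx0.
Qed.

Lemma mulr2n_mx_eq0 (R : numDomainType) m n (X : 'M[R]_(m, n)) : X *+ 2 = 0 -> X = 0.
Proof. by move/eqP; rewrite -scaler_nat scalemx_eq0 pnatr_eq0 => /eqP. Qed.

Lemma half_sum_add_diff (R : numFieldType) m n (A B : 'M[R]_(m, n)) :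
  2^-1 *: (A + B) + 2^-1 *: (A - B) = A.
Proof. by apply/matrixP => i j; rewrite !mxE; field. Qed.

Lemma half_sum_sub_diff (R : numFieldType) m n (A B : 'M[R]_(m, n)) :
  2^-1 *: (A + B) - 2^-1 *: (A - B) = B.
Proof. by apply/matrixP => i j; rewrite !mxE; field. Qed.

Section SumOfSquares.
Variable R : realDomainType.

Lemma mulmx_trmx_eq0 m n (M : 'M[R]_(m, n)) : M *m M^T = 0 -> M = 0.
Proof.
move=> MMt0; apply/matrixP => i j; rewrite mxE.
have /eqP : \sum_k M i k ^+ 2 = 0.
  have := congr1 (fun X : 'M[R]_m => X i i) MMt0; rewrite !mxE => MMtii.
  by rewrite -[RHS]MMtii; apply: eq_bigr => k _; rewrite mxE expr2.
rewrite psumr_eq0 => [/allP/(_ j (mem_index_enum _))|k _]; last exact: sqr_ge0.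
by rewrite sqrf_eq0 => /eqP.
Qed.

Lemma trmx_mulmx_eq0 m n (M : 'M[R]_(m, n)) : M^T *m M = 0 -> M = 0.
Proof.
by move=> MtM0; apply: trmx_inj; rewrite trmx0; apply: mulmx_trmx_eq0; rewrite trmxK.
Qed.

Lemma cV_norm_gt0 n (v : 'cV[R]_n) : v != 0 -> 0 < (v^T *m v) 0 0.
Proof.
move=> v0; rewrite lt_def; apply/andP; split.
  apply: contra v0 => /eqP vv0; apply/eqP/trmx_mulmx_eq0.
  by rewrite [LHS]mx11_scalar vv0 raddf0.
by rewrite mxE; apply: sumr_ge0 => i _; rewrite mxE -expr2 sqr_ge0.
Qed.

Lemma skew_mx_sqr_eq0 n (X : 'M[R]_n) : X^T = - X -> X *m X = 0 -> X = 0.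
Proof. by move=> Xskew XX0; apply: trmx_mulmx_eq0; rewrite Xskew mulNmx XX0 oppr0. Qed.

End SumOfSquares.

Definition mx_biorth (R : comPzRingType) m n (X Y : 'M[R]_(m, n)) :=
  X *m Y^T = 0 /\ X^T *m Y = 0.

Lemma mx_biorth_tr (R : comPzRingType) m n (X Y : 'M[R]_(m, n)) :
  mx_biorth X^T Y^T <-> mx_biorth X Y.
Proof. by rewrite /mx_biorth !trmxK; split=> -[]. Qed.

Lemma mx_biorth_sum_diff_tr (R : comPzRingType) m n (A B : 'M[R]_(m, n)) :
  mx_biorth (A^T + B^T) (A^T - B^T) <-> mx_biorth (A + B) (A - B).
Proof. by rewrite -trmxD -trmxB mx_biorth_tr. Qed.

Lemma mx_biorthC (R : comPzRingType) m n (X Y : 'M[R]_(m, n)) :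
  mx_biorth X Y -> mx_biorth Y X.
Proof.
case=> XYt0 XtY0.
by split; [move: (trmx_mul_eq0 XYt0) | move: (trmx_mul_eq0 XtY0)]; rewrite trmxK.
Qed.

Lemma mx_biorthZ (R : comPzRingType) m n (a b : R) (X Y : 'M[R]_(m, n)) :
  mx_biorth X Y -> mx_biorth (a *: X) (b *: Y).
Proof.
by case=> XYt0 XtY0; split; rewrite trmxZ -scalemxAl -scalemxAr ?XYt0 ?XtY0 !scaler0.
Qed.

Lemma mulmx_sum_diff_tr (R : comPzRingType) m n (A B : 'M[R]_(m, n)) :
  (A + B) *m (A - B)^T + (A - B) *m (A + B)^T = (A *m A^T - B *m B^T) *+ 2.
Proof.
apply/matrixP => i j; rewrite !mxE -?sumrB -?big_split -?sumrB /=.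
by apply: eq_bigr => k _; rewrite !mxE; ring.
Qed.

Section GramMates.
Variable R : realType.

Lemma gram_mates_tr m n (A B : 'M[R]_(m, n)) : gram_mates A^T B^T <-> gram_mates A B.
Proof.
rewrite /gram_mates !trmxK.
by split=> -[AAt AtA AB]; split => // ABt; apply: AB; [rewrite ABt | apply: trmx_inj].
Qed.

Lemma trmx_sum_diff_skew m n (A B : 'M[R]_(m, n)) : A *m A^T = B *m B^T ->
  ((A + B) *m (A - B)^T)^T = - ((A + B) *m (A - B)^T).
Proof.
move=> AAt; apply/eqP; rewrite -addr_eq0 addrC trmx_mul trmxK mulmx_sum_diff_tr AAt.
by rewrite subrr mul0rn.
Qed.

Lemma gram_biorth m n (A B : 'M[R]_(m, n)) :
  A *m A^T = B *m B^T -> A^T *m A = B^T *m B ->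
  (A + B) *m (A - B)^T = 0 -> mx_biorth (A + B) (A - B).
Proof.
move=> AAt AtA SDt0; split => //.
have := trmx_sum_diff_skew (A := A^T) (B := B^T); rewrite -trmxD -trmxB !trmxK.
move=> /(_ AtA) skew; apply: skew_mx_sqr_eq0 => //.
have DSt0 : (A - B) *m (A + B)^T = 0 by rewrite -[A - B]trmxK; exact: trmx_mul_eq0.
by rewrite mulmxA -(mulmxA _ (A - B)) DSt0 mulmx0 mul0mx.
Qed.

Lemma biorth_gram_mates m n (A B : 'M[R]_(m, n)) :
  A <> B -> mx_biorth (A + B) (A - B) -> gram_mates A B.
Proof.
move=> AB [SDt0 StD0]; split => //; apply/eqP; rewrite -subr_eq0; apply/eqP/mulr2n_mx_eq0.
  by rewrite -mulmx_sum_diff_tr SDt0 add0r -[RHS]trmx0 -SDt0 trmx_mul trmxK.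
have := mulmx_sum_diff_tr A^T B^T; rewrite -trmxD -trmxB !trmxK => <-.
by rewrite StD0 add0r -[RHS]trmx0 -StD0 trmx_mul trmxK.
Qed.

Lemma gram_mates_sum_diff_iff m n (A B : 'M[R]_(m, n)) : A <> B ->
  gram_mates A B /\ (A + B) *m (A - B)^T = 0 <-> mx_biorth (A + B) (A - B).
Proof.
move=> AB; split => [[[AAt AtA _] SDt0]|biAB]; first exact: gram_biorth.
by split; [exact: biorth_gram_mates | case: biAB].
Qed.

Lemma gram_mates_diff_sum_iff m n (A B : 'M[R]_(m, n)) : A <> B ->
  gram_mates A B /\ (A - B)^T *m (A + B) = 0 <-> mx_biorth (A + B) (A - B).
Proof.
move=> AB; have ABt : A^T <> B^T by move/trmx_inj.
rewrite -mx_biorth_sum_diff_tr -(gram_mates_sum_diff_iff ABt) gram_mates_tr.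
rewrite -trmxB trmxK -trmxD.
by split=> -[g /trmx_mul_eq0]; rewrite trmxK => h; split.
Qed.

Lemma sym_mulmx_diff_iff m n (A B : 'M[R]_(m, n)) : A *m A^T = B *m B^T ->
  (A *m (A - B)^T)^T = A *m (A - B)^T <-> (A + B) *m (A - B)^T = 0.
Proof.
move=> AAt; set X := (A + B) *m (A - B)^T.
have X_skew : X^T = - X := trmx_sum_diff_skew AAt.
have half : A *m (A - B)^T = 2^-1 *: (X + (A - B) *m (A - B)^T).
  by rewrite -mulmxDl scalemxAl scalerDr half_sum_add_diff.
rewrite half trmxZ trmxD X_skew trmx_mul trmxK.
have half_neq0 : (2^-1 : R) != 0 by rewrite invr_eq0 pnatr_eq0.
split => [/(scalerI half_neq0)/addIr XN|->]; last by rewrite oppr0.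
by apply: mulr2n_mx_eq0; rewrite mulr2n -{1}XN addNr.
Qed.

Lemma gram_mates_sym_iff m n (A B : 'M[R]_(m, n)) : A <> B ->
  gram_mates A B /\ (A *m (A - B)^T)^T = A *m (A - B)^T <-> mx_biorth (A + B) (A - B).
Proof.
move=> AB; rewrite -(gram_mates_sum_diff_iff AB).
by split=> -[g h]; split => //; case: (g) => AAt _ _; apply/(sym_mulmx_diff_iff AAt).
Qed.

Lemma gram_mates_tr_sym_iff m n (A B : 'M[R]_(m, n)) : A <> B ->
  gram_mates A B /\ (A^T *m (A - B))^T = A^T *m (A - B) <-> mx_biorth (A + B) (A - B).
Proof.
move=> AB; have ABt : A^T <> B^T by move/trmx_inj.
by rewrite -mx_biorth_sum_diff_tr -(gram_mates_sym_iff ABt) gram_mates_tr -trmxB trmxK.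
Qed.

End GramMates.

Section CompactSVD.
Variable R : realFieldType.

Definition is_svd m n r (M : 'M[R]_(m, n)) (U : 'M[R]_(m, r)) (V : 'M[R]_(n, r))
    (d : 'rV[R]_r) :=
  [/\ U^T *m U = 1%:M, V^T *m V = 1%:M, forall i, 0 < d 0 i & M = U *m diag_mx d *m V^T].

Lemma diag_mx_unit n (d : 'rV[R]_n) : (forall i, d 0 i != 0) -> diag_mx d \in unitmx.
Proof. by move=> d0; rewrite unitmxE det_diag unitfE; apply/prodf_neq0 => i _. Qed.

Lemma orthonormal_row_mx m p r (Q : 'M[R]_(m, p)) (U : 'M[R]_(m, r)) :
  Q^T *m Q = 1%:M -> U^T *m U = 1%:M -> Q^T *m U = 0 ->
  (row_mx Q U)^T *m row_mx Q U = 1%:M.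
Proof.
move=> QQ UU QU; rewrite tr_row_mx mul_col_row QQ UU QU.
by rewrite -[U^T *m Q]trmxK trmx_mul trmxK QU trmx0 -scalar_mx_block.
Qed.

Lemma mulmx_row_diag_row m n r1 r2 (U1 : 'M[R]_(m, r1)) (U2 : 'M[R]_(m, r2))
    (V1 : 'M[R]_(n, r1)) (V2 : 'M[R]_(n, r2)) c e :
  row_mx U1 U2 *m diag_mx (row_mx c e) *m (row_mx V1 V2)^T =
  U1 *m diag_mx c *m V1^T + U2 *m diag_mx e *m V2^T.
Proof.
by rewrite diag_mx_row mul_row_block !mulmx0 addr0 add0r tr_row_mx mul_row_col.
Qed.

Variables (m n r : nat) (M : 'M[R]_(m, n)).
Variables (U : 'M[R]_(m, r)) (V : 'M[R]_(n, r)) (d : 'rV[R]_r).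
Hypothesis svdM : is_svd M U V d.

Lemma is_svd_tr : is_svd M^T V U d.
Proof.
by case: svdM => UU VV d_gt0 ->; split; rewrite // !trmx_mul trmxK tr_diag_mx mulmxA.
Qed.

Lemma is_svd_mulmxV : M *m V = U *m diag_mx d.
Proof. by case: svdM => _ VV _ ->; rewrite -mulmxA VV mulmx1. Qed.

Lemma is_svd_mulmx_col i : M *m col i V = d 0 i *: col i U.
Proof. by rewrite mulmx_col is_svd_mulmxV col_mul_diag. Qed.

Lemma is_svd_col_norm i : (col i V)^T *m col i V = 1%:M.
Proof.
case: svdM => _ VV _ _; rewrite tr_col rowE colE mulmxA -(mulmxA _ V^T) VV mulmx1.
by rewrite mul_delta_mx; apply/matrixP => a b; rewrite !ord1 !mxE.
Qed.

Lemma is_svd_diag_unit : diag_mx d \in unitmx.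
Proof. by case: svdM => _ _ d_gt0 _; apply: diag_mx_unit => i; rewrite gt_eqF. Qed.

Lemma is_svd_left_kernel p (X : 'M[R]_(p, m)) : X *m M = 0 -> X *m U = 0.
Proof.
move=> XM0; apply/eqP; rewrite -(mulmx_free_eq0 _ (_ : row_free (diag_mx d))).
  by rewrite -mulmxA -is_svd_mulmxV mulmxA XM0 mul0mx.
by rewrite row_free_unit is_svd_diag_unit.
Qed.

Lemma is_svd_eqmx : (V^T == M)%MS.
Proof.
case: (svdM) => UU _ _ Me; apply/andP; split; last by rewrite {1}Me submxMl.
have dfull : row_full (diag_mx d) by rewrite row_full_unit is_svd_diag_unit.
rewrite -(eqmxMfull _ dfull).
suff -> : diag_mx d *m V^T = U^T *m M by exact: submxMl.
by rewrite Me !mulmxA UU mul1mx.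
Qed.

Lemma is_svd_rank : \rank M = r.
Proof.
rewrite -(eqmxP is_svd_eqmx); apply/eqP/row_freeP; exists V.
by case: svdM.
Qed.

End CompactSVD.

Lemma is_svd0 (R : realFieldType) m n : is_svd (0 : 'M[R]_(m, n)) (0 : 'M_(m, 0)) 0 0.
Proof. by split; [apply/matrixP => -[] .. | case | rewrite !mul0mx]. Qed.

Lemma is_svd_add (R : realFieldType) m n r1 r2 (X Y : 'M[R]_(m, n))
    (U1 : 'M_(m, r1)) (V1 : 'M_(n, r1)) c (U2 : 'M_(m, r2)) (V2 : 'M_(n, r2)) e :
  is_svd X U1 V1 c -> is_svd Y U2 V2 e -> X *m Y^T = 0 -> X^T *m Y = 0 ->
  is_svd (X + Y) (row_mx U1 U2) (row_mx V1 V2) (row_mx c e).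
Proof.
move=> svdX svdY XYt0 XtY0.
have U12 : U1^T *m U2 = 0.
  have YtU1 : Y^T *m U1 = 0.
    by apply: (is_svd_left_kernel svdX); have := trmx_mul_eq0 XtY0; rewrite trmxK.
  by apply: (is_svd_left_kernel svdY); have := trmx_mul_eq0 YtU1; rewrite trmxK.
have V12 : V1^T *m V2 = 0.
  have YV1 : Y *m V1 = 0.
    apply: (is_svd_left_kernel (is_svd_tr svdX)).
    by have := trmx_mul_eq0 XYt0; rewrite trmxK.
  exact: (is_svd_left_kernel (is_svd_tr svdY) (trmx_mul_eq0 YV1)).
case: svdX svdY => UU1 VV1 c_gt0 -> [UU2 VV2 e_gt0 ->]; split.
- exact: orthonormal_row_mx.
- exact: orthonormal_row_mx.
- by move=> i; rewrite mxE; case: splitP.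
- by rewrite mulmx_row_diag_row.
Qed.

Section SVDExistence.
Variable R : rcfType.

Lemma sym_eigenvalue_neq0 n (G : 'M[R]_n) : G^T = G -> G != 0 ->
  exists2 a : R, a != 0 & eigenvalue G a.
Proof.
(* Over R[i], G is hermitian, so its spectral decomposition has a real diagonal;
   a nonzero diagonal entry is an eigenvalue of G since G and its
   complexification have the same characteristic polynomial. *)
move=> Gsym G0; pose Gc := map_mx (real_complex R) G.
have Gc_herm : Gc \is hermsymmx.
  apply/is_hermitianmxP; rewrite expr0 scale1r /Gc map_trmx Gsym -map_mx_comp.
  by apply/matrixP => i j; rewrite !mxE /= conj_Creal //; apply/complex_realP; eexists.
have /orthomx_spectralP Gc_eq := hermitian_normalmx Gc_herm.
have d_real := hermitian_spectral_diag_real Gc_herm.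
set P := spectralmx Gc in Gc_eq; set d := spectral_diag Gc in Gc_eq d_real.
have [j dj0] : exists j, d 0 j != 0.
  apply/existsP; apply: contraT; rewrite negb_exists => /forallP d0.
  suff /eqP : Gc = 0 by rewrite map_mx_eq0 (negPf G0).
  rewrite Gc_eq; suff -> : diag_mx d = 0 by rewrite mulmx0 mul0mx.
  by apply/matrixP => i k; rewrite !mxE (eqP (negPn (d0 i))) mul0rn.
have dj_real : d 0 j \is Num.real by have /mxOverP := d_real; apply.
have Gc_dj : eigenvalue Gc (d 0 j).
  have P_unit : P \in unitmx := spectral_unit Gc.
  apply/eigenvalueP; exists (row j P).
    have : P *m Gc = diag_mx d *m P by rewrite Gc_eq !mulmxA mulmxV // mul1mx.
    move=> /(congr1 (row j)); rewrite -!row_mul => ->.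
    by rewrite row_mul row_diag_mx -scalemxAl -rowE.
  apply/eqP => Pj0; have := congr1 (row j) (mulmxV P_unit).
  rewrite row_mul Pj0 mul0mx => /rowP/(_ j); rewrite !mxE eqxx => /eqP.
  by rewrite eq_sym oner_eq0.
exists (complex.Re (d 0 j)).
  by apply: contra dj0 => /eqP Re0; rewrite -(RRe_real dj_real) Re0.
move: Gc_dj; rewrite !eigenvalue_root_char -map_char_poly -(RRe_real dj_real).
by rewrite /root horner_map /= => /eqP [->].
Qed.

Lemma sym_unit_eigenvector n (G : 'M[R]_n) : G^T = G -> G != 0 ->
  exists a (w : 'cV[R]_n), [/\ a != 0, G *m w = a *: w & w^T *m w = 1%:M].
Proof.
move=> Gsym G0; have [a a0 /eigenvalueP [v vG v0]] := sym_eigenvalue_neq0 Gsym G0.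
have t_gt0 : 0 < (v *m v^T) 0 0.
  by have := @cV_norm_gt0 _ _ v^T; rewrite trmxK trmx_eq0; apply.
pose c := (Num.sqrt ((v *m v^T) 0 0))^-1.
exists a, (c *: v^T); split => //.
  by rewrite -scalemxAr -Gsym -trmx_mul vG trmxZ !scalerA mulrC.
rewrite trmxZ trmxK -scalemxAl -scalemxAr scalerA [v *m v^T]mx11_scalar.
by rewrite scale_scalar_mx -expr2 exprVn sqr_sqrtr ?ltW // mulVf ?gt_eqF.
Qed.

Lemma singular_pair_exists m n (M : 'M[R]_(m, n)) : M != 0 ->
  exists s (u : 'cV_m) (w : 'cV_n),
    [/\ 0 < s, M *m w = s *: u, M^T *m u = s *: w, u^T *m u = 1%:M & w^T *m w = 1%:M].
Proof.
move=> M0; have MtM_sym : (M^T *m M)^T = M^T *m M by rewrite trmx_mul trmxK.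
have MtM0 : M^T *m M != 0 by apply: contra M0 => /eqP/trmx_mulmx_eq0 ->.
have [a [w [a0 MtMw ww]]] := sym_unit_eigenvector MtM_sym MtM0.
have Mw_norm : (M *m w)^T *m (M *m w) = a%:M.
  by rewrite trmx_mul -mulmxA (mulmxA M^T) MtMw -scalemxAr ww scale_scalar_mx mulr1.
have Mw0 : M *m w != 0.
  apply: contra a0 => /eqP Mw0; move/matrixP/(_ 0 0): Mw_norm.
  by rewrite Mw0 mulmx0 !mxE eqxx mulr1n => <-.
have a_gt0 : 0 < a by have := cV_norm_gt0 Mw0; rewrite Mw_norm mxE eqxx mulr1n.
pose s := Num.sqrt a.
have s_gt0 : 0 < s by rewrite sqrtr_gt0.
have ss : s * s = a by rewrite -expr2 sqr_sqrtr ?ltW.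
exists s, (s^-1 *: (M *m w)), w; split => //.
- by rewrite scalerA mulfV ?gt_eqF // scale1r.
- by rewrite -scalemxAr mulmxA MtMw scalerA -ss mulKf ?gt_eqF.
- rewrite trmxZ -scalemxAl -scalemxAr scalerA Mw_norm scale_scalar_mx -ss.
  by rewrite -invfM mulVf // mulf_neq0 ?gt_eqF.
Qed.

Lemma mxrank_lt_kernel m1 m2 n (A : 'M[R]_(m1, n)) (B : 'M[R]_(m2, n)) (w : 'cV[R]_n) :
  (A <= B)%MS -> (w^T <= B)%MS -> A *m w = 0 -> w^T *m w = 1%:M -> (\rank A < \rank B)%N.
Proof.
move=> sAB swB Aw0 ww; suff: (A < B)%MS by rewrite ltmxErank => /andP[].
rewrite ltmxE sAB; apply/negP => sBA; have /submxP [X wXA] := submx_trans swB sBA.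
by have := matrix_nonzero1 R 0; rewrite -ww wXA -mulmxA Aw0 mulmx0 eqxx.
Qed.

Theorem svd_exists m n (M : 'M[R]_(m, n)) :
  exists r (U : 'M_(m, r)) (V : 'M_(n, r)) d, is_svd M U V d.
Proof.
(* Induction on the rank: split off a singular pair (s, u, w); the rest
   M - s u w^T has smaller rank and is biorthogonal to s u w^T. *)
have [k] := ubnP (\rank M); elim: k M => // k IH M rkM.
have [->|M0] := eqVneq M 0; first by exists 0%N, 0, 0, 0; exact: is_svd0.
have [s [u [w [s_gt0 Mw Mtu uu ww]]]] := singular_pair_exists M0.
have uM : u^T *m M = s *: w^T by rewrite -[M]trmxK -trmx_mul Mtu trmxZ.
pose M' := M - s *: (u *m w^T).
have M'w : M' *m w = 0 by rewrite mulmxBl -scalemxAl -mulmxA ww mulmx1 Mw subrr.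
have uM' : u^T *m M' = 0 by rewrite mulmxBr -scalemxAr mulmxA uu mul1mx uM subrr.
have [|r [U [V [d svdM']]]] := IH M'.
  rewrite -ltnS; apply: (leq_trans _ rkM); rewrite ltnS.
  apply: (mxrank_lt_kernel _ _ M'w ww).
    rewrite (_ : M' = (1%:M - u *m u^T) *m M) ?submxMl //.
    by rewrite /M' mulmxBl mul1mx -mulmxA uM scalemxAr.
  apply/submxP; exists (s^-1 *: u^T).
  by rewrite -scalemxAl uM scalerA mulVf ?gt_eqF ?scale1r.
have svd_uw : is_svd (s *: (u *m w^T)) u w s%:M.
  split=> // [i|]; first by rewrite ord1 mxE eqxx mulr1n.
  have -> : diag_mx (s%:M : 'rV_1) = s%:M by apply/matrixP => i j; rewrite !ord1 !mxE.
  by rewrite mul_mx_scalar scalemxAl.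
exists (1 + r)%N, (row_mx u U), (row_mx w V), (row_mx s%:M d).
rewrite -[M](subrK (s *: (u *m w^T))) addrC; apply: is_svd_add svd_uw svdM' _ _.
  by rewrite -scalemxAl -mulmxA -trmx_mul M'w trmx0 mulmx0 scaler0.
by rewrite trmxZ trmx_mul trmxK -scalemxAl -mulmxA uM' mulmx0 scaler0.
Qed.

Lemma orthonormal_completion m p (Q : 'M[R]_(m, p)) : Q^T *m Q = 1%:M ->
  exists2 U : 'M[R]_m, U^T *m U = 1%:M & Q = U *m pid_mx p.
Proof.
(* The left singular vectors of the projector 1 - Q Q^T complete the columns of Q. *)
move=> QQ; pose P := 1%:M - Q *m Q^T.
have [r [U2 [V2 [d svdP]]]] := svd_exists P.
have QU2 : Q^T *m U2 = 0.
  by apply: (is_svd_left_kernel svdP); rewrite mulmxBr mulmx1 mulmxA QQ mul1mx subrr.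
have QU2_orth : (row_mx Q U2)^T *m row_mx Q U2 = 1%:M.
  by case: svdP => U2U2 _ _ _; exact: orthonormal_row_mx.
have pr_m : (p + r)%N = m.
  apply/eqP; rewrite eqn_leq; apply/andP; split.
    rewrite -(mxrank1 R (p + r)) -QU2_orth.
    exact: leq_trans (mxrankM_maxr _ _) (rank_leq_row _).
  rewrite -{1}(mxrank1 R m) -(subrK (Q *m Q^T) 1%:M) -/P.
  apply: leq_trans (mxrank_add _ _) _; rewrite addnC (is_svd_rank svdP) leq_add //.
  exact: leq_trans (mxrankM_maxl _ _) (rank_leq_col _).
subst m; exists (row_mx Q U2) => //.
by rewrite pid_mx_col mul_row_col mulmx1 mulmx0 addr0.
Qed.

End SVDExistence.

Section SignChange.
Variable R : realType.

Definition rect_diag_mx m n r (d : 'rV[R]_r) : 'M[R]_(m, n) :=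
  pid_mx r *m diag_mx d *m (pid_mx r)^T.

Lemma rect_diag_mxE m n r (d : 'rV[R]_r) (i : 'I_m) (j : 'I_n) :
  rect_diag_mx m n d i j = \sum_(a < r) ((i == a :> nat) && (j == a :> nat))%:R * d 0 a.
Proof.
rewrite mxE; apply: eq_bigr => a _; rewrite mul_mx_diag !mxE.
have pidE (p : nat) (x : 'I_p) : ((x == a :> nat) && (x < r))%N = (x == a :> nat).
  by case: eqP => // ->; rewrite ltn_ord.
by rewrite !pidE; case: (_ == _); case: (_ == _); rewrite /= ?mul1r ?mulr1 ?mul0r ?mulr0.
Qed.

Lemma rect_diag_mx_nonneg m n r (d : 'rV[R]_r) :
  (forall a, 0 <= d 0 a) -> rect_diag_nonneg (rect_diag_mx m n d).
Proof.
move=> d_ge0; split=> i j ij; rewrite rect_diag_mxE; last first.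
  by apply: sumr_ge0 => a _; rewrite mulr_ge0 ?ler0n.
rewrite big1 // => a _; case: eqP => [ia|]; case: eqP => [ja|] //=; rewrite ?mul0r //.
by case: ij; rewrite ia ja.
Qed.

Lemma rect_diag_mx_gt0 m n r (d : 'rV[R]_r) (i : 'I_m) (j : 'I_n) :
  (forall a, 0 < d 0 a) -> (i : nat) = j -> (i < r)%N -> 0 < rect_diag_mx m n d i j.
Proof.
move=> d_gt0 ij ir; rewrite rect_diag_mxE (bigD1 (Ordinal ir)) //= -ij eqxx mul1r.
by rewrite ltr_wpDr ?d_gt0 //; apply: sumr_ge0 => a _; rewrite mulr_ge0 ?ler0n ?ltW.
Qed.

Lemma is_diag_mulmx_tr m n (Sig : 'M[R]_(m, n)) :
  (forall (i : 'I_m) (j : 'I_n), (i : nat) <> j -> Sig i j = 0) ->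
  is_diag_mx (Sig *m Sig^T).
Proof.
move=> Sig_off; apply/is_diag_mxP => i j /eqP ij; rewrite mxE big1 // => a _.
rewrite mxE; case: (eqVneq (i : nat) a) => [ia|/eqP ia].
  by rewrite (Sig_off j) ?mulr0 // => ja; apply: ij; rewrite ia ja.
by rewrite (Sig_off _ _ ia) mul0r.
Qed.

Definition sign_flip_mx m k : 'M[R]_m := diag_mx (\row_i (if (i < k)%N then -1 else 1)).

Lemma sign_flip_mxE m k i : sign_flip_mx m k i i = if (i < k)%N then -1 else 1.
Proof. by rewrite !mxE eqxx mulr1n. Qed.

Lemma sign_flip_diag m k : sign_diag_mx (sign_flip_mx m k).
Proof.
split=> [i j ij|i]; first by rewrite !mxE; case: eqP.
by rewrite sign_flip_mxE; case: ifP; [right|left].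
Qed.

Lemma card_sign_flip m k : (k <= m)%N -> #|[set i | sign_flip_mx m k i i == -1]| = k.
Proof.
move=> km; have widen_inj : injective (widen_ord km).
  by move=> a b /(congr1 val) ab; apply: val_inj.
rewrite -[RHS]card_ord -(card_imset _ widen_inj); apply: eq_card => i.
have neg1 : (1 : R) != -1 by apply/eqP; lra.
rewrite inE sign_flip_mxE; case: ifPn => [ik|]; rewrite ?eqxx ?(negPf neg1).
  by apply/esym/imsetP; exists (Ordinal ik) => //; apply: val_inj.
by move=> ik; apply/esym/imsetP => -[j _ ij]; move: ik; rewrite ij (ltn_ord j).
Qed.

Lemma sign_flip_rect_diag m n k l (c : 'rV[R]_k) (e : 'rV[R]_l) :
  sign_flip_mx m k *m rect_diag_mx m n (row_mx c e) = rect_diag_mx m n (row_mx (- c) e).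
Proof.
apply/matrixP => i j; rewrite mul_diag_mx mxE !rect_diag_mxE mulr_sumr.
apply: eq_bigr => a _; rewrite !mxE; case: (eqVneq (i : nat) a) => [->|]; last first.
  by rewrite /= !mul0r mulr0.
case: splitP => a' ->; rewrite ?ltn_ord ?mxE; first by rewrite mulN1r mulrN.
by rewrite mul1r.
Qed.

Lemma sign_change_sv_compact m n k l (A B : 'M[R]_(m, n))
    (L : 'M_(m, k + l)) (Rr : 'M_(n, k + l)) (c : 'rV_k) (e : 'rV_l) :
  is_svd A L Rr (row_mx c e) -> B = L *m diag_mx (row_mx (- c) e) *m Rr^T ->
  sign_change_sv k A B.
Proof.
move=> svdA Be; have [LL RR lam_gt0 Ae] := svdA.
have [U UU LE] := orthonormal_completion LL.
have [V VV RE] := orthonormal_completion RR.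
have [klm kln] : (k + l <= m)%N /\ (k + l <= n)%N.
  by rewrite -(is_svd_rank svdA) rank_leq_row rank_leq_col.
exists U, V, (rect_diag_mx m n (row_mx c e)), (sign_flip_mx m k); split; split => //.
- by apply: rect_diag_mx_nonneg => a; apply: ltW.
- by rewrite Ae LE RE trmx_mul !mulmxA.
- exact: sign_flip_diag.
- by rewrite card_sign_flip // (leq_trans (leq_addr l k)).
- have one_neg1 : (1 : R) != -1 by apply/eqP; lra.
  move=> i; rewrite sign_flip_mxE.
  case: ifPn => [ik _|_ /eqP]; last by rewrite (negPf one_neg1).
  have ikl : (i < k + l)%N by rewrite ltn_addr.
  have in_ : (i < n)%N by rewrite (leq_trans ikl).
  by exists (Ordinal in_) => //; apply: rect_diag_mx_gt0.
- rewrite -(mulmxA U (sign_flip_mx m k)) sign_flip_rect_diag Be LE RE.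
  by rewrite /rect_diag_mx trmx_mul !mulmxA.
Qed.

Lemma biorth_sign_change m n (A B : 'M[R]_(m, n)) :
  mx_biorth (A + B) (A - B) -> sign_change_sv (\rank (A - B)) A B.
Proof.
move=> biAB; set C := 2^-1 *: (A - B); set E := 2^-1 *: (A + B).
have [k [U1 [V1 [c svdC]]]] := svd_exists C.
have [l [U2 [V2 [e svdE]]]] := svd_exists E.
have [CEt CtE] : mx_biorth C E by apply/mx_biorthZ/mx_biorthC.
have -> : \rank (A - B) = k.
  by rewrite -(is_svd_rank svdC) mxrank_scale_nz // invr_eq0 pnatr_eq0.
have svdA : is_svd A (row_mx U1 U2) (row_mx V1 V2) (row_mx c e).
  by rewrite -(half_sum_add_diff A B) addrC; exact: is_svd_add.
apply: (sign_change_sv_compact svdA).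
case: svdC svdE => _ _ _ Ce [_ _ _ Ee].
by rewrite mulmx_row_diag_row raddfN mulmxN mulNmx -Ce -Ee addrC half_sum_sub_diff.
Qed.

Lemma sign_change_biorth m n k (A B : 'M[R]_(m, n)) :
  sign_change_sv k A B -> mx_biorth (A + B) (A - B).
Proof.
case=> U [V [Sig [S [[UU VV [Sig_off _] Ae] [[S_off S_pm] _ _ Be]]]]].
have /diag_mxP [s Se] : is_diag_mx S.
  by apply/is_diag_mxP => i j /eqP ij; apply: S_off => eij; apply: ij; rewrite eij.
have /diag_mxP [g Ge] := is_diag_mulmx_tr Sig_off.
have SS : S *m S = 1%:M.
  rewrite Se mulmx_diag -diag_const_mx; congr diag_mx; apply/rowP => i; rewrite !mxE.
  by have := S_pm i; rewrite Se mxE eqxx mulr1n => -[] ->; rewrite ?mulrNN mulr1.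
have St : S^T = S by rewrite Se tr_diag_mx.
have SG : S *m (Sig *m Sig^T) = (Sig *m Sig^T) *m S by rewrite Se Ge diag_mxC.
have pq : (1%:M + S) *m (1%:M - S) = 0.
  by rewrite mulmxDl mul1mx mulmxBr mulmx1 SS addrC addrA subrK subrr.
have SE : A + B = U *m (1%:M + S) *m Sig *m V^T by rewrite Ae Be mulmxDr mulmx1 !mulmxDl.
have DE : A - B = U *m (1%:M - S) *m Sig *m V^T by rewrite Ae Be mulmxBr mulmx1 !mulmxBl.
split; rewrite SE DE !trmx_mul !trmxK ?trmxB ?trmxD trmx1 St.
  have comm : (1%:M + S) *m (Sig *m Sig^T) = Sig *m Sig^T *m (1%:M + S).
    by rewrite mulmxDl mulmxDr mul1mx mulmx1 SG.
  rewrite -!mulmxA (mulmxA V^T) VV mul1mx (mulmxA Sig) (mulmxA (1%:M + S)) comm.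
  by rewrite -!mulmxA (mulmxA (1%:M + S)) pq mul0mx !mulmx0.
rewrite -!mulmxA (mulmxA U^T) UU mul1mx !mulmxA -(mulmxA _ (1%:M + S)) pq.
by rewrite mulmx0 !mul0mx.
Qed.

Lemma sign_change_biorth_iff m n (A B : 'M[R]_(m, n)) :
  sign_change_sv (\rank (A - B)) A B <-> mx_biorth (A + B) (A - B).
Proof. by split; [apply: sign_change_biorth | apply: biorth_sign_change]. Qed.

End SignChange.

Section SingularVectors.
Variable R : realType.

Definition right_sv_basis m n (A B : 'M[R]_(m, n)) k :=
  exists W : 'M[R]_(k, n),
    [/\ forall i, right_sing_vec_pos A (row i W)^T, row_free W, (W == A - B)%MS &
        forall i, (A + B) *m (row i W)^T = 0].

Definition left_sv_basis m n (A B : 'M[R]_(m, n)) k :=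
  exists W : 'M[R]_(k, m),
    [/\ forall i, left_sing_vec_pos A (row i W)^T, row_free W, (W == (A - B)^T)%MS &
        forall i, (A + B)^T *m (row i W)^T = 0].

Lemma left_sing_vec_posE m n (A : 'M[R]_(m, n)) u :
  left_sing_vec_pos A u <-> right_sing_vec_pos A^T u.
Proof.
rewrite /left_sing_vec_pos /right_sing_vec_pos trmxK.
by split=> -[s [v [s_gt0 Av Atu vv uu]]]; exists s, v.
Qed.

Lemma left_sv_basis_tr m n (A B : 'M[R]_(m, n)) k :
  left_sv_basis A B k <-> right_sv_basis A^T B^T k.
Proof.
rewrite /left_sv_basis /right_sv_basis trmxB trmxD.
by split=> -[W [sv Wfree WD SW]]; exists W; split=> // i; apply/left_sing_vec_posE.
Qed.

Lemma biorth_right_sv_basis m n (A B : 'M[R]_(m, n)) :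
  mx_biorth (A + B) (A - B) -> right_sv_basis A B (\rank (A - B)).
Proof.
case=> SDt0 StD0; have [r [U [V [d svdD]]]] := svd_exists (A - B).
rewrite (is_svd_rank svdD); have [UU VV d_gt0 _] := svdD.
have SV : (A + B) *m V = 0 := is_svd_left_kernel (is_svd_tr svdD) SDt0.
have StU : (A + B)^T *m U = 0 := is_svd_left_kernel svdD StD0.
have AE := esym (half_sum_add_diff A B).
exists V^T; split.
- move=> i; rewrite tr_row trmxK; exists (2^-1 * d 0 i), (col i U); split.
  + by rewrite mulr_gt0 ?invr_gt0 ?ltr0n.
  + rewrite AE mulmxDl -!scalemxAl mulmx_col SV col0 scaler0 add0r.
    by rewrite (is_svd_mulmx_col svdD) scalerA.
  + rewrite AE trmxD !trmxZ mulmxDl -!scalemxAl mulmx_col StU col0 scaler0 add0r.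
    by rewrite (is_svd_mulmx_col (is_svd_tr svdD)) scalerA.
  + exact: is_svd_col_norm svdD i.
  + exact: is_svd_col_norm (is_svd_tr svdD) i.
- by apply/row_freeP; exists V.
- exact: is_svd_eqmx svdD.
- by move=> i; rewrite tr_row trmxK mulmx_col SV col0.
Qed.

Lemma mulmx_sum_diff_right_sing_vec m n (A B : 'M[R]_(m, n)) (w : 'cV[R]_n) :
  (A + B) *m (A - B)^T = 0 -> (w^T <= A - B)%MS -> (A + B) *m w = 0 ->
  right_sing_vec_pos A w -> (A + B)^T *m (A - B) *m w = 0.
Proof.
(* With S = A + B, D = A - B: S w = 0 gives D w = 2 s u, so z := S^T D w
   = 2 s (2 s w - D^T u) lies in Col(D^T) like w; as S D^T = 0, z^T z = 0. *)
move=> SDt0 /submxP [x wE] Sw [s [u [_ Aw Atu _ _]]].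
have wD : w = (A - B)^T *m x^T by rewrite -[w]trmxK wE trmx_mul.
have two : A + A = 2%:R *: A by rewrite scaler_nat mulr2n.
have Dw : (A - B) *m w = (2 * s) *: u.
  have -> : A - B = 2%:R *: A - (A + B) by rewrite -two addrKA.
  by rewrite mulmxBl Sw subr0 -scalemxAl Aw scalerA.
have StE : (A + B)^T = 2%:R *: A^T - (A - B)^T.
  by rewrite -trmxZ -trmxB -two addrKA opprK.
set z := (A + B)^T *m (A - B) *m w.
have zE : z = (A - B)^T *m ((2 * s) *: ((2 * s) *: x^T - u)).
  rewrite /z -mulmxA Dw StE -scalemxAr mulmxBl -scalemxAl Atu scalerA.
  by rewrite -scalemxAr mulmxBr -scalemxAr -wD.
apply: trmx_mulmx_eq0; rewrite {2}zE /z !trmx_mul trmxK.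
by rewrite -!mulmxA (mulmxA (A + B)) SDt0 mul0mx !mulmx0.
Qed.

Lemma right_sv_basis_biorth m n (A B : 'M[R]_(m, n)) k :
  right_sv_basis A B k -> mx_biorth (A + B) (A - B).
Proof.
case=> W [sv _ /andP [sWD /submxP [X DE]] SW].
have SDt0 : (A + B) *m (A - B)^T = 0.
  by rewrite DE trmx_mul mulmxA (mulmx_tr_rows_eq0 SW) mul0mx.
split => //; apply: mulmx_trmx_eq0; rewrite trmx_mul trmxK mulmxA {2}DE trmx_mul mulmxA.
suff -> : (A + B)^T *m (A - B) *m W^T = 0 by rewrite !mul0mx.
apply: mulmx_tr_rows_eq0 => i; apply: mulmx_sum_diff_right_sing_vec => //.
by rewrite trmxK (submx_trans (row_sub i W) sWD).
Qed.

Lemma right_sv_basis_biorth_iff m n (A B : 'M[R]_(m, n)) :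
  right_sv_basis A B (\rank (A - B)) <-> mx_biorth (A + B) (A - B).
Proof. by split; [apply: right_sv_basis_biorth | apply: biorth_right_sv_basis]. Qed.

Lemma left_sv_basis_biorth_iff m n (A B : 'M[R]_(m, n)) :
  left_sv_basis A B (\rank (A - B)) <-> mx_biorth (A + B) (A - B).
Proof.
rewrite left_sv_basis_tr -mx_biorth_sum_diff_tr -right_sv_basis_biorth_iff.
by rewrite -trmxB mxrank_tr.
Qed.

End SingularVectors.

Unset Implicit Arguments.

Theorem corollary3p10 (R : realType) (m n : nat) (A B : 'M[R]_(m, n)) :
  zero_one_mx A -> zero_one_mx B -> A <> B ->
  [<->
   (* (i) *)
   gram_mates A B /\ (A + B) *m (A - B)^T = 0;
   (* (ii) *)
   gram_mates A B /\ (A - B)^T *m (A + B) = 0;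
   (* (iii) *)
   sign_change_sv (\rank (A - B)) A B;
   (* (iv): the rows of W are v_1^T, ..., v_k^T *)
   exists W : 'M[R]_(\rank (A - B), n),
     [/\ (forall i, right_sing_vec_pos A (row i W)^T),
         row_free W, (W == A - B)%MS &
         (forall i, (A + B) *m (row i W)^T = 0)];
   (* (v): the rows of W are u_1^T, ..., u_k^T; Col(A-B) = Row((A-B)^T) *)
   exists W : 'M[R]_(\rank (A - B), m),
     [/\ (forall i, left_sing_vec_pos A (row i W)^T),
         row_free W, (W == (A - B)^T)%MS &
         (forall i, (A + B)^T *m (row i W)^T = 0)];
   (* (vi) *)
   gram_mates A B /\ (A *m (A - B)^T)^T = A *m (A - B)^T;
   (* (vii) *)
   gram_mates A B /\ (A^T *m (A - B))^T = A^T *m (A - B)].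
Proof.
move=> _ _ AB.
have iff_i := gram_mates_sum_diff_iff AB; have iff_ii := gram_mates_diff_sum_iff AB.
have iff_iii := sign_change_biorth_iff A B; have iff_iv := right_sv_basis_biorth_iff A B.
have iff_v := left_sv_basis_biorth_iff A B; have iff_vi := gram_mates_sym_iff AB.
have iff_vii := gram_mates_tr_sym_iff AB.
by tfae=> [/iff_i/iff_ii | /iff_ii/iff_iii | /iff_iii/iff_iv | /iff_iv/iff_v | /iff_v/iff_vi
         | /iff_vi/iff_vii | /iff_vii/iff_i].
Qed.
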